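(* For every integer $n\geq 4$, the wheel $W_n=C_n\lor K_1$ satisfies $\eta(W_n)=2$ if $n$ is even and $\eta(W_n)=3$ if $n$ is odd.
   Context: All graphs are finite, simple and undirected. $C_n$ is the cycle on $n$ vertices, $K_1$ is the graph with one vertex, and $G_1\lor G_2$ (join) is the graph on $V(G_1)\cup V(G_2)$ with edges $E(G_1)\cup E(G_2)\cup\{(u,v):u\in V(G_1),v\in V(G_2)\}$. For a vertex $v$, $N(v)$ is its set of neighbours. For a positive integer $k$, $[k]=\{1,\dots,k\}$. For a labeling $f:V(G)\to[k]$ and $S\subseteq V(G)$, $f(S)=\sum_{u\in S}f(u)$. A labeling $f:V(G)\to[k]$ is an additive $k$-coloring if $f(N(u))\neq f(N(v))$ for every edge $(u,v)$ of $G$. The additive chromatic number $\eta(G)$ is the least $k$ for which $G$ has an additive $k$-coloring. *)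

From mathcomp Require Import all_boot.
Unset Printing Implicit Defensive.

(* A simple graph on a finite type T is given by an adjacency relation e
   (assumed symmetric and irreflexive for the graphs we build). *)

Definition neigh_sum (T : finType) (e : rel T) (f : T -> nat) (u : T) : nat :=
  \sum_(v | e u v) f v.

Definition additive_coloring (T : finType) (e : rel T) (k : nat) (f : T -> nat) : Prop :=
  (forall v, 1 <= f v <= k) /\
  (forall u v, e u v -> neigh_sum T e f u <> neigh_sum T e f v).

Definition has_additive_coloring (T : finType) (e : rel T) (k : nat) : Prop :=
  exists f : T -> nat, additive_coloring T e k f.

Definition additive_chromatic_number_is (T : finType) (e : rel T) (k : nat) : Prop :=
  has_additive_coloring T e k /\ (forall k', k' < k -> ~ has_additive_coloring T e k').

(* Cycle C_n on 'I_n: i ~ j iff j = i+1 mod n or i = j+1 mod n (simple for n >= 3). *)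
Definition cycle_rel (n : nat) : rel 'I_n :=
  fun i j => (val j == (val i).+1 %% n) || (val i == (val j).+1 %% n).

(* Wheel W_n = C_n \/ K_1 on option 'I_n, None being the hub. *)
Definition wheel_rel (n : nat) : rel (option 'I_n) :=
  fun x y => match x, y with
             | None, None => false
             | None, Some _ => true
             | Some _, None => true
             | Some i, Some j => cycle_rel n i j
             end.

From mathcomp Require Import all_boot zify.

(* The hub sees the sum of all rim labels and rim vertex i sees the hub label
   plus the labels of i - 1 and i + 1.  Labelling the hub 1 and the rim
   1,2,1,2,... (n even) or 1,3,1,3,...,1,3,2 (n odd) makes consecutive rim sums
   differ, while the hub sum, at least 3n/2, exceeds every rim sum.  One colour
   fails since all rim sums then agree.  With two colours the rim labels form a
   binary cyclic sequence A with A(i) + A(i+2) <> A(i+1) + A(i+3); this forces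
   the equalities A(j) = A(j+1) to occur in isolated adjacent pairs, so their
   number is even, as is the number of changes of any binary cyclic sequence,
   and n, the sum of the two, is even. *)

Lemma big_option (R : Type) (idx : R) (op : Monoid.law idx) (T : finType)
    (P : pred (option T)) (F : option T -> R) :
  \big[op/idx]_(v | P v) F v =
  op (if P None then F None else idx) (\big[op/idx]_(i | P (Some i)) F (Some i)).
Proof.
have -> : index_enum (option T) = None :: map Some (index_enum T).
  by rewrite /index_enum !unlock /= /option_enum unlock.
by rewrite big_cons big_map; case: (P None); rewrite ?Monoid.mul1m.
Qed.

Section CyclicOrdinals.

Context {n : nat}.
Implicit Types (i j : 'I_n).

Lemma val_ordS i : (ordS i : nat) = if i == n.-1 :> nat then 0 else i.+1.
Proof.
have ltin := ltn_ord i; rewrite /= -[n in _ %% n](@prednK n); last by lia.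
case: eqP => [->|i_neq]; first by rewrite modnn.
by rewrite modn_small //; lia.
Qed.

Lemma val_ord_pred i : (ord_pred i : nat) = if i == 0 :> nat then n.-1 else i.-1.
Proof.
have ltin := ltn_ord i; rewrite /=; case: eqP => [i0|i_neq].
  by rewrite i0 add0n modn_small //; lia.
have -> : (i + n).-1 = i.-1 + n by lia.
by rewrite modnDr modn_small //; lia.
Qed.

Lemma ordS_neq_ord_pred i : 2 < n -> ordS i != ord_pred i.
Proof.
move=> n_gt2; apply/eqP => /(congr1 (@nat_of_ord n)).
rewrite val_ordS val_ord_pred; have := ltn_ord i; repeat case: eqP; lia.
Qed.

Lemma cycle_relE i j : cycle_rel n i j = (j == ordS i) || (j == ord_pred i).
Proof.
rewrite /cycle_rel -[_ == _.+1 %% n]/(j == ordS i) -[val i == _]/(i == ordS j).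
congr (_ || _); apply/eqP/eqP => ->; by rewrite ?ordSK ?ord_predK.
Qed.

Lemma sum_paired_even {z : 'I_n -> nat} :
    (forall i, z (ordS i) * (z i + z (ordS (ordS i))) = z (ordS i)) ->
  ~~ odd (\sum_i z i).
Proof.
move=> paired.
have -> : \sum_i z i = (\sum_i z i * z (ordS i)).*2.
  rewrite (reindex_inj (@ordS_inj n)) /=.
  rewrite (eq_bigr _ (fun i _ => esym (paired i))).
  under eq_bigr do rewrite mulnDr.
  rewrite big_split /= -addnn.
  congr (_ + _); first by apply: eq_bigr => i _; rewrite mulnC.
  by rewrite [RHS](reindex_inj (@ordS_inj n)).
by rewrite odd_double.
Qed.

Lemma sum_changes_binary_even {A : 'I_n -> nat} :
  (forall i, A i <= 1) -> ~~ odd (\sum_i (A i != A (ordS i))).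
Proof.
move=> binA.
have change i : (A i != A (ordS i)) + (A i * A (ordS i)).*2 = A i + A (ordS i).
  by have := binA i; have := binA (ordS i); case: (A i) => [|[|]]; case: (A _) => [|[|]].
have sums : \sum_i (A i != A (ordS i)) + (\sum_i A i * A (ordS i)).*2 = (\sum_i A i).*2.
  rewrite -!addnn [X in _ = _ + X](reindex_inj (@ordS_inj n)) -!big_split /=.
  by apply: eq_bigr => i _; rewrite addnn change.
by move/(congr1 odd): sums; rewrite !oddD !odd_double addbF => ->.
Qed.

Lemma sum_ge_of_consecutive {r : 'I_n -> nat} {c : nat} :
  (forall i, c <= r i + r (ordS i)) -> c * n <= (\sum_i r i).*2.
Proof.
move=> pair_ge; rewrite -addnn [X in _ <= _ + X](reindex_inj (@ordS_inj n)) -big_split /=.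
by rewrite -[n in c * n]card_ord mulnC -sum_nat_const leq_sum.
Qed.

Lemma unbalanced_binary_cycle_even (A : 'I_n -> nat) :
    (forall i, A i <= 1) ->
    (forall i, A i + A (ordS (ordS i)) != A (ordS i) + A (ordS (ordS (ordS i)))) ->
  ~~ odd n.
Proof.
move=> binA unbalanced.
pose z i : nat := A i == A (ordS i).
have paired i : z (ordS i) * (z i + z (ordS (ordS i))) = z (ordS i).
  have := unbalanced i; have := binA i; have := binA (ordS i).
  have := binA (ordS (ordS i)); have := binA (ordS (ordS (ordS i))).
  rewrite /z; lia.
have -> : n = \sum_i (A i != A (ordS i)) + \sum_i z i.
  rewrite -big_split -[n in LHS]card_ord -sum1_card /=.
  by apply: eq_bigr => i _; rewrite /z; case: eqP.
by rewrite oddD (negbTE (sum_changes_binary_even binA))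
  (negbTE (sum_paired_even paired)).
Qed.

End CyclicOrdinals.

Section Wheel.

Variable n : nat.
Hypothesis n_gt2 : 2 < n.
Implicit Types (i : 'I_n) (f : option 'I_n -> nat).

Lemma neigh_sum_hub f : neigh_sum _ (wheel_rel n) f None = \sum_i f (Some i).
Proof. by rewrite /neigh_sum big_option /= add0n. Qed.

Lemma neigh_sum_rim f i :
  neigh_sum _ (wheel_rel n) f (Some i) = f None + (f (Some (ord_pred i)) + f (Some (ordS i))).
Proof.
rewrite /neigh_sum big_option /=; congr (_ + _).
rewrite (bigD1 (ord_pred i)) /=; last by rewrite cycle_relE eqxx orbT.
congr (_ + _); apply: big_pred1 => j /=.
rewrite cycle_relE; case: (eqVneq j (ord_pred i)) => [->|_]; last by rewrite orbF andbT.
by rewrite andbF eq_sym (negbTE (ordS_neq_ord_pred i n_gt2)).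
Qed.

Lemma wheel_additive_coloring k f :
    (forall v, 1 <= f v <= k) ->
    (forall i, neigh_sum _ (wheel_rel n) f (Some i) !=
               neigh_sum _ (wheel_rel n) f (Some (ordS i))) ->
    (forall i, neigh_sum _ (wheel_rel n) f None != neigh_sum _ (wheel_rel n) f (Some i)) ->
  additive_coloring _ (wheel_rel n) k f.
Proof.
move=> bounds rim_ne hub_ne; split=> // -[i|] [j|] //=.
- rewrite cycle_relE => /orP[] /eqP ->; first exact/eqP/rim_ne.
  by rewrite -{1}(ord_predK i); apply/eqP; rewrite eq_sym; apply: rim_ne.
- by move=> _; apply/eqP; rewrite eq_sym.
- by move=> _; apply/eqP.
Qed.

Definition wheel_labeling (r : 'I_n -> nat) (v : option 'I_n) : nat :=
  if v is Some i then r i else 1.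

Lemma has_coloring_of_rim_labels k c (r : 'I_n -> nat) :
    (forall i, 1 <= r i <= k) ->
    (forall i, r (ord_pred i) + r (ordS i) != r i + r (ordS (ordS i))) ->
    (forall i, c <= r i + r (ordS i)) ->
    (1 + 2 * k).*2 < c * n ->
  has_additive_coloring _ (wheel_rel n) k.
Proof.
move=> bounds rim_ne pair_ge hub_large; exists (wheel_labeling r).
have i0 : 'I_n := Ordinal (ltnW (ltnW n_gt2)).
apply: wheel_additive_coloring => [[i|]|i|i] /=.
- exact: bounds.
- by have := bounds i0; lia.
- by rewrite !neigh_sum_rim ordSK eqn_add2l; apply: rim_ne.
- have := sum_ge_of_consecutive pair_ge; have := bounds (ord_pred i); have := bounds (ordS i).
  rewrite neigh_sum_hub neigh_sum_rim /=; lia.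
Qed.

Lemma wheel_coloring_even : ~~ odd n -> 3 < n -> has_additive_coloring _ (wheel_rel n) 2.
Proof.
move=> even_n n_gt3.
have odd_ordS i : odd (ordS i) = ~~ odd i.
  rewrite val_ordS; have := ltn_ord i; case: eqP => [-> _ |_ _] //=.
  by rewrite -oddS (ltn_predK n_gt2) (negbTE even_n).
have odd_ord_pred i : odd (ord_pred i) = ~~ odd i.
  by rewrite -{2}(ord_predK i) odd_ordS negbK.
apply: (@has_coloring_of_rim_labels 2 3 (fun i => (odd i).+1)) => [i|i|i|].
- by case: odd.
- by rewrite !odd_ordS odd_ord_pred negbK; case: odd.
- by rewrite odd_ordS; case: odd.
- lia.
Qed.

Lemma wheel_coloring_odd : odd n -> 3 < n -> has_additive_coloring _ (wheel_rel n) 3.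
Proof.
move=> odd_n n_gt3.
pose r i := if i == n.-1 :> nat then 2 else if odd i then 3 else 1.
(* Around the rim the neighbour sums are 6, 3, 7, 3, ..., 7, 4, 5. *)
apply: (@has_coloring_of_rim_labels 3 3 r) => [i|i|i|].
- by rewrite /r; case: ifP => //; case: ifP.
- rewrite /r !val_ordS val_ord_pred; have := ltn_ord i.
  by repeat case: ifP => /=; lia.
- rewrite /r !val_ordS; have := ltn_ord i.
  by repeat case: ifP => /=; lia.
- lia.
Qed.

Lemma no_wheel_coloring_lt2 k f : k < 2 -> ~ additive_coloring _ (wheel_rel n) k f.
Proof.
move=> k_lt2 [bounds distinct]; have f1 v : f v = 1 by have := bounds v; lia.
have i0 : 'I_n := Ordinal (ltnW (ltnW n_gt2)).
apply: (distinct (Some i0) (Some (ordS i0))); first by rewrite /= cycle_relE eqxx.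
by rewrite !neigh_sum_rim !f1.
Qed.

Lemma no_wheel_coloring_2_odd f : odd n -> ~ additive_coloring _ (wheel_rel n) 2 f.
Proof.
move=> odd_n [bounds distinct].
suff /negP[] : ~~ odd n by [].
apply: (@unbalanced_binary_cycle_even n (fun i => f (Some i) - 1)) => i.
  by have := bounds (Some i); lia.
have := distinct (Some (ordS i)) (Some (ordS (ordS i))).
rewrite /= cycle_relE eqxx !neigh_sum_rim !ordSK => /(_ isT) rim_ne.
have := bounds (Some i); have := bounds (Some (ordS i)).
have := bounds (Some (ordS (ordS i))); have := bounds (Some (ordS (ordS (ordS i)))).
lia.
Qed.

End Wheel.

Theorem mainTheorem8 (n : nat) (hn : 4 <= n) :
  additive_chromatic_number_is (option (ordinal n)) (wheel_rel n) (if odd n then 3 else 2).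
Proof.
have n_gt2 : 2 < n by lia.
split.
  case: ifP => odd_n; first by apply: wheel_coloring_odd.
  by apply: wheel_coloring_even; rewrite ?odd_n.
move=> k k_lt [f col].
have [k_lt2|k_ge2] := ltnP k 2; first exact: no_wheel_coloring_lt2 col.
case: ifP k_lt => odd_n k_lt; last by lia.
have k2 : k = 2 by lia.
by rewrite k2 in col; exact: no_wheel_coloring_2_odd col.
Qed.
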